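(* Let $\alpha,\mu,\nu,\theta,\beta>0$ with $\varrho=\alpha/\mu<1$, let $(N(\infty),M(\infty))$ be distributed according to the stationary distribution of the two-class Processor-Sharing process described in the context, and let $\mathrm{F}_A(u,v)=\mathbb{E}\big(u^{N(\infty)}v^{M(\infty)}\big)$ for $(u,v)\in\mathbb{D}\times\mathbb{D}$, $\mathbb{D}$ the open unit disk. Then $\mathrm{F}_A$ extends analytically to the domain $\mathbb{D}(0,1/\varrho)\times\mathbb{C}$, where $\mathbb{D}(0,1/\varrho)$ is the open disk of center $0$ and radius $1/\varrho$ (indeed the power series defining $\mathrm{F}_A$ converges on this domain).
   Context: $(N,M)$ is the continuous-time Markov process on $\mathbb{N}^2$ with transitions $(n,m)\to(n+1,m)$ at rate $\alpha$, $(n,m)\to(n,m+1)$ at rate $\beta$, $(n,m)\to(n-1,m)$ at rate $\mu n/(n+m)$, $(n,m)\to(n,m-1)$ at rate $\nu m/(n+m)+\theta m$ (convention $0/0=0$); it models a Processor-Sharing queue with patient and impatient customers and has a stationary distribution iff $\varrho<1$. $A=\beta/\theta$. *)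

From Stdlib Require Import Reals Lra.
From Coquelicot Require Import Coquelicot.
Open Scope R_scope.

(* x / y with the convention 0/0 = 0 (only used with y a natural number). *)
Definition fracn (x : R) (y : nat) : R :=
  match y with O => 0 | S _ => x / INR y end.

Definition out_rate (alpha beta mu nu theta : R) (n m : nat) : R :=
  alpha + beta + mu * fracn (INR n) (n + m)
  + (nu * fracn (INR m) (n + m) + theta * INR m).

Definition in_flux (alpha beta mu nu theta : R) (pi : nat -> nat -> R)
    (n m : nat) : R :=
  (match n with O => 0 | S n' => pi n' m * alpha end)
  + (match m with O => 0 | S m' => pi n m' * beta end)
  + pi (S n) m * (mu * fracn (INR (S n)) (S n + m))
  + pi n (S m) * (nu * fracn (INR (S m)) (n + S m) + theta * INR (S m)).

Definition square_sum (f : nat -> nat -> R) (K : nat) : R :=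
  sum_f_R0 (fun n => sum_f_R0 (fun m => f n m) K) K.

Definition is_stationary_PS (alpha beta mu nu theta : R)
    (pi : nat -> nat -> R) : Prop :=
  (forall n m, 0 <= pi n m)
  /\ Un_cv (square_sum pi) 1
  /\ (forall n m, pi n m * out_rate alpha beta mu nu theta n m
                  = in_flux alpha beta mu nu theta pi n m).

From Stdlib Require Import Reals Lra Lia.
From Coquelicot Require Import Coquelicot.
Open Scope R_scope.

(* The process is only known through its balance equations, which we sum over
   rectangles: the flux across the boundary of a rectangle is balanced.

   Across the cut between rows m and m+1 the downward rate is at
   least theta (m+1) and the upward rate is beta, so the row masses are bounded
   by the Poisson(beta/theta) weights, and E[y^M] <= exp(beta y / theta) for all
   y >= 0.

   Across the cut between columns n and n+1 the leftward rate is
   at least mu (n+1)/(n+1+m), so mu E[(n+1)/(n+1+M); N = n+1] <= alpha P(N = n).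
   Weighting by x^(n+1) and splitting according to whether n+1 >= k M gives
   (1 - 1/k) E[x^N] <= (alpha x / mu) E[x^N] + 1 + E[(x^k)^M], which bounds
   E[x^N] as soon as alpha x / mu < 1 - 1/k.

   Finally |u|^n |v|^m <= x^n + y^m for some x < mu / alpha and some y.  All sums
   are truncated to squares; the truncation errors are multiples of the mass of
   the boundary shell of the square, which tends to 0. *)

Lemma sum_f_R0_mono (f : nat -> R) (a b : nat) :
  (forall i, 0 <= f i) -> (a <= b)%nat -> sum_f_R0 f a <= sum_f_R0 f b.
Proof.
  intros Hf Hab; induction Hab as [|b _ IH]; [lra|].
  rewrite tech5; specialize (Hf (S b)); lra.
Qed.

Lemma sum_f_R0_swap (f : nat -> nat -> R) (K L : nat) :
  sum_f_R0 (fun n => sum_f_R0 (fun m => f n m) L) K =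
  sum_f_R0 (fun m => sum_f_R0 (fun n => f n m) K) L.
Proof.
  induction K as [|K IH]; [reflexivity|].
  rewrite tech5, IH, <- plus_sum; reflexivity.
Qed.

Definition shell (f : nat -> nat -> R) (j : nat) : R :=
  sum_f_R0 (fun n => f n (S j)) j + sum_f_R0 (fun m => f (S j) m) (S j).

Lemma square_sum_S (f : nat -> nat -> R) (j : nat) :
  square_sum f (S j) = square_sum f j + shell f j.
Proof.
  unfold square_sum, shell; rewrite tech5.
  replace (sum_f_R0 (fun n => sum_f_R0 (fun m => f n m) (S j)) j)
    with (sum_f_R0 (fun n => sum_f_R0 (fun m => f n m) j) j
          + sum_f_R0 (fun n => f n (S j)) j) by (rewrite <- plus_sum; reflexivity).
  ring.
Qed.

Lemma rect_le_square_sum (f : nat -> nat -> R) (K L N : nat) :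
  (forall n m, 0 <= f n m) -> (K <= N)%nat -> (L <= N)%nat ->
  sum_f_R0 (fun n => sum_f_R0 (fun m => f n m) L) K <= square_sum f N.
Proof.
  intros Hf HK HL; unfold square_sum.
  apply Rle_trans with (sum_f_R0 (fun n => sum_f_R0 (fun m => f n m) N) K).
  - apply sum_growing; intros n; apply sum_f_R0_mono; auto.
  - apply sum_f_R0_mono; auto; intros n; apply cond_pos_sum; auto.
Qed.

Lemma Rle_of_le_plus_vanishing (x b c : R) (d : nat -> R) (j0 : nat) :
  0 <= c -> Un_cv d 0 -> (forall j, (j0 <= j)%nat -> x <= b + c * d j) -> x <= b.
Proof.
  intros Hc Hd Hx; apply Rnot_lt_le; intros Hlt.
  destruct (Hd ((x - b) / (c + 1))) as [N HN]; [apply Rdiv_lt_0_compat; lra|].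
  specialize (HN (Nat.max N j0) (Nat.le_max_l _ _)).
  specialize (Hx (Nat.max N j0) (Nat.le_max_r _ _)).
  unfold Rdist in HN; rewrite Rminus_0_r in HN; apply Rabs_def2 in HN as [HN _].
  assert (Hq : (c + 1) * ((x - b) / (c + 1)) = x - b) by (field; lra).
  nra.
Qed.

Fixpoint defect_coef (alpha beta theta : R) (m : nat) : R :=
  match m with
  | O => 0
  | S m' => (beta * defect_coef alpha beta theta m' + alpha) / (theta * INR m)
  end.

Lemma defect_coef_ge0 (alpha beta theta : R) (m : nat) :
  0 <= alpha -> 0 <= beta -> 0 < theta -> 0 <= defect_coef alpha beta theta m.
Proof.
  intros Ha Hb Ht; induction m as [|m IH]; cbn [defect_coef]; [lra|].
  apply Rdiv_le_0_compat; [nra|].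
  apply Rmult_lt_0_compat; [lra|apply lt_0_INR; lia].
Qed.

Lemma poisson_recursion_bound (alpha beta theta d : R) (y : nat -> R) (M : nat) :
  0 <= beta -> 0 < theta -> y 0%nat <= 1 ->
  (forall m, (m < M)%nat -> theta * INR (S m) * y (S m) <= beta * y m + alpha * d) ->
  forall m, (m <= M)%nat ->
  y m <= (beta / theta) ^ m / INR (Factorial.fact m) + defect_coef alpha beta theta m * d.
Proof.
  intros Hb Ht Hy0 Hrec m; induction m as [|m IH]; intros Hm; [simpl; lra|].
  specialize (IH ltac:(lia)); specialize (Hrec m Hm).
  set (p := fun i => (beta / theta) ^ i / INR (Factorial.fact i)) in *.
  set (c := defect_coef alpha beta theta) in *.
  change (y m <= p m + c m * d) in IH; change (y (S m) <= p (S m) + c (S m) * d).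
  assert (Hpos : 0 < INR (S m)) by (apply lt_0_INR; lia).
  assert (Hnext : theta * INR (S m) * (p (S m) + c (S m) * d)
                  = beta * (p m + c m * d) + alpha * d).
  { unfold p, c; cbn [defect_coef]; rewrite fact_simpl, mult_INR; simpl pow.
    pose proof (INR_fact_lt_0 m); field; lra. }
  apply (Rmult_le_reg_l (theta * INR (S m))); [apply Rmult_lt_0_compat; lra|].
  rewrite Hnext; pose proof (Rmult_le_compat_l beta _ _ Hb IH); lra.
Qed.

Lemma exp_partial_sum_le (x : R) (N : nat) :
  0 <= x -> sum_f_R0 (fun i => x ^ i / INR (Factorial.fact i)) N <= exp x.
Proof.
  intros Hx; eapply Rle_trans; [|apply (sum_incr _ N _ (E1_cvg x))].
  - right; apply sum_eq; intros i _; unfold Rdiv; ring.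
  - intros i; apply Rmult_le_pos; [|apply pow_le; lra].
    left; apply Rinv_0_lt_compat, INR_fact_lt_0.
Qed.

Lemma fracn_ge0 (x : R) (y : nat) : 0 <= x -> 0 <= fracn x y.
Proof.
  intros Hx; destruct y; unfold fracn; [lra|].
  apply Rdiv_le_0_compat; [lra|apply lt_0_INR; lia].
Qed.

Lemma pow_le_pow_mul (x : R) (k n m : nat) :
  1 <= x -> (n <= k * m)%nat -> x ^ n <= (x ^ k) ^ m.
Proof. intros Hx Hn; rewrite <- pow_mult; apply Rle_pow; auto. Qed.

(* Either n >= k m, and then n / (n + m) >= 1 - 1/k, or x ^ n <= (x ^ k) ^ m. *)
Lemma pow_le_frac_plus_pow (x : R) (k n m : nat) :
  1 <= x -> (1 <= k)%nat ->
  (1 - / INR k) * x ^ n <= x ^ n * fracn (INR n) (n + m) + (x ^ k) ^ m.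
Proof.
  intros Hx Hk.
  assert (Hxn : 1 <= x ^ n) by (apply pow_R1_Rle; lra).
  assert (Hxkm : 0 <= (x ^ k) ^ m) by (apply pow_le, pow_le; lra).
  assert (Hk0 : 1 <= INR k) by (apply (le_INR 1); lia).
  assert (Hfr : 0 <= fracn (INR n) (n + m)) by (apply fracn_ge0, pos_INR).
  assert (Hinv : 0 < / INR k) by (apply Rinv_0_lt_compat; lra).
  destruct (Compare_dec.le_lt_dec (k * m) n) as [Hkm|Hkm].
  - destruct n as [|n].
    + assert (m = 0%nat) by nia; subst m; simpl; nra.
    + assert (Hq : 1 - / INR k <= fracn (INR (S n)) (S n + m)).
      { change (S n + m)%nat with (S (n + m)); unfold fracn.
        replace (INR (S (n + m))) with (INR (S n) + INR m)
          by (rewrite <- plus_INR; reflexivity).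
        apply le_INR in Hkm; rewrite mult_INR in Hkm.
        pose proof (pos_INR m); pose proof (lt_0_INR (S n) ltac:(lia)).
        apply Rmult_le_reg_r with (INR k * (INR (S n) + INR m)); [nra|].
        replace ((1 - / INR k) * (INR k * (INR (S n) + INR m)))
          with ((INR k - 1) * (INR (S n) + INR m)) by (field; lra).
        replace (INR (S n) / (INR (S n) + INR m) * (INR k * (INR (S n) + INR m)))
          with (INR k * INR (S n)) by (field; lra).
        nra. }
      nra.
  - pose proof (pow_le_pow_mul x k n m Hx ltac:(lia)); nra.
Qed.

Lemma sum_le_of_contraction (x e : nat -> R) (c q : R) (N : nat) :
  c <= 1 -> 0 <= q -> (forall n, 0 <= x n) -> 0 <= e 0%nat ->
  (forall n, (n < N)%nat -> c * x (S n) <= q * x n + e (S n)) ->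
  (c - q) * sum_f_R0 x N <= x 0%nat + sum_f_R0 e N.
Proof.
  intros Hc Hq Hx He0 Hstep.
  assert (Hstrong : forall N', (N' <= N)%nat ->
    c * sum_f_R0 x N' + q * x N' <= x 0%nat + q * sum_f_R0 x N' + sum_f_R0 e N').
  { induction N' as [|N' IH]; intros HN; simpl.
    - pose proof (Hx 0%nat); nra.
    - specialize (IH ltac:(lia)); specialize (Hstep N' HN); lra. }
  specialize (Hstrong N (le_n N)); pose proof (Hx N); nra.
Qed.

Lemma pow_mul_pow_le (r s x : R) (k n m : nat) :
  1 <= r -> 1 <= s -> r <= x -> s <= (x / r) ^ k ->
  r ^ n * s ^ m <= x ^ n + (r ^ k * s) ^ m.
Proof.
  intros Hr Hs Hrx Hk.
  assert (Hxr : 1 <= x / r).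
  { apply (Rmult_le_reg_r r); [lra|]; unfold Rdiv; rewrite Rmult_assoc, Rinv_l; lra. }
  assert (Hxn : 0 <= x ^ n) by (apply pow_le; lra).
  assert (Hrsm : 0 <= (r ^ k * s) ^ m) by (apply pow_le, Rmult_le_pos; [apply pow_le|]; lra).
  assert (Hrn0 : 0 <= r ^ n) by (apply pow_le; lra).
  destruct (Compare_dec.le_lt_dec (k * m) n) as [Hkm|Hkm].
  - assert (Hsm : s ^ m <= (x / r) ^ n).
    { apply Rle_trans with (((x / r) ^ k) ^ m); [apply pow_incr; lra|].
      rewrite <- pow_mult; apply Rle_pow; auto. }
    replace (x ^ n) with (r ^ n * (x / r) ^ n)
      by (rewrite <- Rpow_mult_distr; f_equal; field; lra).
    pose proof (Rmult_le_compat_l _ _ _ Hrn0 Hsm); lra.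
  - pose proof (pow_le_pow_mul r k n m Hr ltac:(lia)) as Hrn.
    rewrite Rpow_mult_distr.
    pose proof (Rmult_le_compat_r (s ^ m) _ _ ltac:(apply pow_le; lra) Hrn); lra.
Qed.

Lemma exists_gap (rho r : R) :
  0 < rho -> rho * r < 1 ->
  exists x k, r < x /\ (1 <= k)%nat /\ 0 < 1 - / INR k - rho * x.
Proof.
  intros Hrho Hr.
  exists ((r + / rho) / 2).
  assert (Hx : rho * ((r + / rho) / 2) = (rho * r + 1) / 2) by (field; lra).
  destruct (archimed_cor1 ((1 - rho * r) / 2)) as [k [Hk Hk0]]; [lra|].
  exists k; repeat split; [|lia|lra].
  apply (Rmult_lt_reg_l rho); [lra|]; lra.
Qed.

Lemma exists_pow_ge (q s : R) : 1 < q -> exists k, s <= q ^ k.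
Proof.
  intros Hq; destruct (Pow_x_infinity q ltac:(rewrite Rabs_pos_eq; lra) s) as [k Hk].
  exists k; specialize (Hk k (le_n k)).
  rewrite Rabs_pos_eq in Hk by (apply pow_le; lra); lra.
Qed.

Section Probability.

Variable pi : nat -> nat -> R.
Hypothesis pi_ge0 : forall n m, 0 <= pi n m.
Hypothesis pi_total : Un_cv (square_sum pi) 1.

Lemma shell_ge0 (j : nat) : 0 <= shell pi j.
Proof.
  unfold shell; apply Rplus_le_le_0_compat; apply cond_pos_sum; auto.
Qed.

Lemma square_sum_le_1 (N : nat) : square_sum pi N <= 1.
Proof.
  apply growing_ineq; auto.
  intros j; rewrite square_sum_S; pose proof (shell_ge0 j); lra.
Qed.

Lemma rect_sum_le_1 (K L : nat) :
  sum_f_R0 (fun n => sum_f_R0 (fun m => pi n m) L) K <= 1.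
Proof.
  eapply Rle_trans; [apply (rect_le_square_sum _ K L (Nat.max K L)); auto; lia|].
  apply square_sum_le_1.
Qed.

Lemma shell_cv_0 : Un_cv (shell pi) 0.
Proof.
  intros eps Heps; destruct (pi_total (eps / 2)) as [N HN]; [lra|].
  exists N; intros j Hj; unfold Rdist; rewrite Rminus_0_r.
  pose proof (HN j Hj) as Hcur; pose proof (HN (S j) ltac:(lia)) as Hnext.
  unfold Rdist in Hcur, Hnext; rewrite square_sum_S in Hnext.
  apply Rabs_def2 in Hcur, Hnext; apply Rabs_def1; lra.
Qed.

Lemma column_le_shell (n j : nat) :
  (n <= j)%nat -> sum_f_R0 (fun i => pi i (S j)) n <= shell pi j.
Proof.
  intros Hn; unfold shell.
  pose proof (sum_f_R0_mono (fun i => pi i (S j)) n j (fun i => pi_ge0 _ _) Hn).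
  pose proof (cond_pos_sum (fun m => pi (S j) m) (S j) (fun m => pi_ge0 _ _)).
  lra.
Qed.

Lemma row_le_shell (m j : nat) :
  (m <= S j)%nat -> sum_f_R0 (fun i => pi (S j) i) m <= shell pi j.
Proof.
  intros Hm; unfold shell.
  pose proof (sum_f_R0_mono (fun i => pi (S j) i) m (S j) (fun i => pi_ge0 _ _) Hm).
  pose proof (cond_pos_sum (fun n => pi n (S j)) j (fun n => pi_ge0 _ _)).
  lra.
Qed.

End Probability.

Definition balanced (alpha beta : R) (a b pi : nat -> nat -> R) : Prop :=
  forall n m, pi n m * (alpha + beta + a n m + b n m) =
    (match n with O => 0 | S n' => pi n' m * alpha end)
    + (match m with O => 0 | S m' => pi n m' * beta end)
    + pi (S n) m * a (S n) m + pi n (S m) * b n (S m).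

Lemma balanced_transpose (alpha beta : R) (a b pi : nat -> nat -> R) :
  balanced alpha beta a b pi ->
  balanced beta alpha (fun n m => b m n) (fun n m => a m n) (fun n m => pi m n).
Proof. intros H n m; specialize (H m n); destruct n, m; lra. Qed.

Section Cuts.

Variables (alpha beta : R) (a b pi : nat -> nat -> R).
Hypothesis pi_balanced : balanced alpha beta a b pi.
Hypothesis a_0 : forall m, a 0%nat m = 0.
Hypothesis b_0 : forall n, b n 0%nat = 0.

Lemma column_balance (n L : nat) :
  alpha * sum_f_R0 (fun m => pi n m) L + sum_f_R0 (fun m => pi n m * a n m) L
  + beta * pi n L =
  (match n with O => 0 | S n' => alpha * sum_f_R0 (fun m => pi n' m) L end)
  + sum_f_R0 (fun m => pi (S n) m * a (S n) m) L + pi n (S L) * b n (S L).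
Proof.
  induction L as [|L IH].
  - pose proof (pi_balanced n 0%nat) as H; rewrite b_0 in H; destruct n; simpl in *; lra.
  - pose proof (pi_balanced n (S L)) as H; destruct n; simpl in *; lra.
Qed.

(* Flux balance across the boundary of the rectangle [0, n] x [0, L]. *)
Lemma cut_balance (L n : nat) :
  sum_f_R0 (fun m => pi (S n) m * a (S n) m) L
  + sum_f_R0 (fun i => pi i (S L) * b i (S L)) n
  = alpha * sum_f_R0 (fun m => pi n m) L + beta * sum_f_R0 (fun i => pi i L) n.
Proof.
  induction n as [|n IH].
  - pose proof (column_balance 0%nat L) as H.
    rewrite (sum_eq_R0 (fun m => pi 0%nat m * a 0%nat m)) in H
      by (intros m _; rewrite a_0; ring).
    simpl in *; lra.
  - pose proof (column_balance (S n) L) as H; simpl in *; lra.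
Qed.

Lemma cut_flux_le (L n : nat) :
  (forall n m, 0 <= pi n m) -> (forall n m, 0 <= b n m) ->
  sum_f_R0 (fun m => pi (S n) m * a (S n) m) L
  <= alpha * sum_f_R0 (fun m => pi n m) L + beta * sum_f_R0 (fun i => pi i L) n.
Proof.
  intros Hpi Hb; rewrite <- cut_balance.
  pose proof (cond_pos_sum (fun i => pi i (S L) * b i (S L)) n
                (fun i => Rmult_le_pos _ _ (Hpi _ _) (Hb _ _))).
  lra.
Qed.

End Cuts.

Section Moments.

Variables (alpha beta mu theta : R) (a b pi : nat -> nat -> R).
Hypotheses (alpha_gt0 : 0 < alpha) (beta_gt0 : 0 < beta)
           (mu_gt0 : 0 < mu) (theta_gt0 : 0 < theta).
Hypothesis pi_ge0 : forall n m, 0 <= pi n m.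
Hypothesis pi_total : Un_cv (square_sum pi) 1.
Hypothesis pi_balanced : balanced alpha beta a b pi.
Hypothesis a_0 : forall m, a 0%nat m = 0.
Hypothesis b_0 : forall n, b n 0%nat = 0.
Hypothesis a_ge : forall n m, mu * fracn (INR n) (n + m) <= a n m.
Hypothesis b_ge : forall n m, theta * INR m <= b n m.

Lemma a_ge0 (n m : nat) : 0 <= a n m.
Proof.
  eapply Rle_trans; [|apply a_ge].
  apply Rmult_le_pos; [lra|apply fracn_ge0, pos_INR].
Qed.

Lemma b_ge0 (n m : nat) : 0 <= b n m.
Proof.
  eapply Rle_trans; [|apply b_ge].
  apply Rmult_le_pos; [lra|apply pos_INR].
Qed.

Lemma row_mass_recursion (j m : nat) :
  (m <= j)%nat ->
  theta * INR (S m) * sum_f_R0 (fun i => pi i (S m)) (S j)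
  <= beta * sum_f_R0 (fun i => pi i m) (S j) + alpha * shell pi j.
Proof.
  intros Hm.
  pose proof (cut_flux_le beta alpha (fun n m => b m n) (fun n m => a m n) (fun n m => pi m n)
    (balanced_transpose _ _ _ _ _ pi_balanced) b_0 a_0 (S j) m
    (fun n m => pi_ge0 m n) (fun n m => a_ge0 m n)) as Hflux; cbn beta in Hflux.
  pose proof (row_le_shell pi pi_ge0 m j ltac:(lia)) as Hshell.
  assert (Hb : theta * INR (S m) * sum_f_R0 (fun i => pi i (S m)) (S j)
               <= sum_f_R0 (fun i => pi i (S m) * b i (S m)) (S j)).
  { rewrite scal_sum; apply sum_Rle; intros i _.
    pose proof (b_ge i (S m)); pose proof (pi_ge0 i (S m)); nra. }
  nra.
Qed.

Lemma M_moment_bound (y : R) (K M : nat) :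
  0 <= y ->
  sum_f_R0 (fun n => sum_f_R0 (fun m => pi n m * y ^ m) M) K <= exp (beta / theta * y).
Proof.
  intros Hy.
  set (C := sum_f_R0 (fun m => defect_coef alpha beta theta m * y ^ m) M).
  apply (Rle_of_le_plus_vanishing _ _ C (shell pi) (Nat.max K M)).
  { apply cond_pos_sum; intros m; apply Rmult_le_pos;
      [apply defect_coef_ge0; lra|apply pow_le; lra]. }
  { apply shell_cv_0; auto. }
  intros j Hj.
  set (row := fun m => sum_f_R0 (fun i => pi i m) (S j)).
  assert (Hrow : forall m, (m <= M)%nat ->
    row m <= (beta / theta) ^ m / INR (Factorial.fact m)
             + defect_coef alpha beta theta m * shell pi j).
  { apply (poisson_recursion_bound alpha beta theta (shell pi j) row M); try lra.
    - exact (rect_sum_le_1 pi pi_ge0 pi_total (S j) 0).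
    - intros m Hm; apply row_mass_recursion; lia. }
  rewrite sum_f_R0_swap.
  apply Rle_trans with (sum_f_R0 (fun m => y ^ m * row m) M).
  { apply sum_Rle; intros m _; rewrite <- scal_sum.
    apply Rmult_le_compat_l; [apply pow_le; lra|].
    apply sum_f_R0_mono; [intros; apply pi_ge0|lia]. }
  apply Rle_trans with (sum_f_R0 (fun m => (beta / theta * y) ^ m / INR (Factorial.fact m)
                          + defect_coef alpha beta theta m * y ^ m * shell pi j) M).
  { apply sum_Rle; intros m Hm.
    apply Rle_trans with (y ^ m * ((beta / theta) ^ m / INR (Factorial.fact m)
                                   + defect_coef alpha beta theta m * shell pi j)).
    - apply Rmult_le_compat_l; [apply pow_le; lra|apply Hrow; exact Hm].
    - right; rewrite Rpow_mult_distr; pose proof (INR_fact_lt_0 m); field; lra. }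
  rewrite plus_sum, <- (scal_sum (fun m => defect_coef alpha beta theta m * y ^ m)).
  pose proof (exp_partial_sum_le (beta / theta * y) M
                ltac:(apply Rmult_le_pos; [apply Rdiv_le_0_compat|]; lra)).
  fold C; lra.
Qed.

Lemma column_recursion (x : R) (k j n : nat) :
  1 <= x -> (1 <= k)%nat -> (n <= j)%nat ->
  (1 - / INR k) * (x ^ S n * sum_f_R0 (fun m => pi (S n) m) (S j))
  <= alpha / mu * x * (x ^ n * sum_f_R0 (fun m => pi n m) (S j))
     + (x ^ S n * (beta / mu * shell pi j)
        + sum_f_R0 (fun m => pi (S n) m * (x ^ k) ^ m) (S j)).
Proof.
  intros Hx Hk Hn.
  pose proof (cut_flux_le alpha beta a b pi pi_balanced a_0 b_0 (S j) n pi_ge0 b_ge0) as Hflux.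
  pose proof (column_le_shell pi pi_ge0 n j Hn) as Hshell.
  assert (Hxn : 0 < x ^ S n) by (apply pow_lt; lra).
  assert (Hsplit : (1 - / INR k) * (x ^ S n * sum_f_R0 (fun m => pi (S n) m) (S j))
     <= x ^ S n / mu * sum_f_R0 (fun m => pi (S n) m * a (S n) m) (S j)
        + sum_f_R0 (fun m => pi (S n) m * (x ^ k) ^ m) (S j)).
  { rewrite !scal_sum, <- plus_sum; apply sum_Rle; intros m _.
    pose proof (pow_le_frac_plus_pow x k (S n) m Hx Hk) as Hp.
    assert (Ha : x ^ S n * fracn (INR (S n)) (S n + m) <= a (S n) m * (x ^ S n / mu)).
    { pose proof (Rmult_le_compat_r (x ^ S n / mu) _ _
        ltac:(apply Rdiv_le_0_compat; lra) (a_ge (S n) m)).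
      replace (mu * fracn (INR (S n)) (S n + m) * (x ^ S n / mu))
        with (x ^ S n * fracn (INR (S n)) (S n + m)) in * by (field; lra).
      lra. }
    pose proof (pi_ge0 (S n) m); nra. }
  assert (Hcut : x ^ S n / mu * sum_f_R0 (fun m => pi (S n) m * a (S n) m) (S j)
     <= x ^ S n / mu * (alpha * sum_f_R0 (fun m => pi n m) (S j) + beta * shell pi j)).
  { apply Rmult_le_compat_l; [apply Rdiv_le_0_compat; lra|]; nra. }
  replace (x ^ S n / mu * (alpha * sum_f_R0 (fun m => pi n m) (S j) + beta * shell pi j))
    with (alpha / mu * x * (x ^ n * sum_f_R0 (fun m => pi n m) (S j))
          + x ^ S n * (beta / mu * shell pi j)) in Hcut by (simpl; field; lra).
  lra.
Qed.

Lemma weighted_columns_bound (x : R) (k K j : nat) :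
  1 <= x -> (1 <= k)%nat -> (K <= j)%nat ->
  (1 - / INR k - alpha / mu * x)
    * sum_f_R0 (fun n => x ^ n * sum_f_R0 (fun m => pi n m) (S j)) (S K)
  <= 1 + exp (beta / theta * x ^ k) + beta / mu * sum_f_R0 (pow x) (S K) * shell pi j.
Proof.
  intros Hx Hk Hj.
  set (err := fun n => x ^ n * (beta / mu * shell pi j)
                       + sum_f_R0 (fun m => pi n m * (x ^ k) ^ m) (S j)).
  assert (Hshell : 0 <= beta / mu * shell pi j).
  { apply Rmult_le_pos; [apply Rdiv_le_0_compat; lra|apply shell_ge0; auto]. }
  eapply Rle_trans; [apply (sum_le_of_contraction _ err)|].
  - pose proof (Rinv_0_lt_compat (INR k) (lt_0_INR k ltac:(lia))); lra.
  - apply Rmult_le_pos; [apply Rdiv_le_0_compat|]; lra.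
  - intros n; apply Rmult_le_pos; [apply pow_le; lra|apply cond_pos_sum; auto].
  - apply Rplus_le_le_0_compat; [lra|].
    apply cond_pos_sum; intros; apply Rmult_le_pos; [auto|apply pow_le, pow_le; lra].
  - intros n Hn; apply column_recursion; auto; lia.
  - assert (Hcol0 : sum_f_R0 (fun m => pi 0%nat m) (S j) <= 1)
      by exact (rect_sum_le_1 pi pi_ge0 pi_total 0 (S j)).
    pose proof (M_moment_bound (x ^ k) (S K) (S j) ltac:(apply pow_le; lra)) as Hmoment.
    unfold err; rewrite plus_sum, <- scal_sum, pow_O, Rmult_1_l.
    lra.
Qed.

Lemma N_moment_bound (x : R) (k K : nat) :
  1 <= x -> (1 <= k)%nat -> 0 < 1 - / INR k - alpha / mu * x ->
  sum_f_R0 (fun n => sum_f_R0 (fun m => pi n m * x ^ n) K) K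
  <= (1 + exp (beta / theta * x ^ k)) / (1 - / INR k - alpha / mu * x).
Proof.
  intros Hx Hk Hgap.
  set (gap := 1 - / INR k - alpha / mu * x) in *.
  set (G := sum_f_R0 (pow x) (S K)).
  assert (HG : 0 <= G) by (apply cond_pos_sum; intros; apply pow_le; lra).
  apply (Rle_of_le_plus_vanishing _ _ (beta / mu * G / gap) (shell pi) K).
  { apply Rdiv_le_0_compat; [apply Rmult_le_pos; [apply Rdiv_le_0_compat|]|]; lra. }
  { apply shell_cv_0; auto. }
  intros j Hj.
  pose proof (weighted_columns_bound x k K j Hx Hk Hj) as Hcols; fold gap G in Hcols.
  apply Rle_trans with
    (sum_f_R0 (fun n => x ^ n * sum_f_R0 (fun m => pi n m) (S j)) (S K)).
  - apply Rle_trans with (sum_f_R0 (fun n => x ^ n * sum_f_R0 (fun m => pi n m) (S j)) K).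
    + apply sum_Rle; intros n _; rewrite <- (scal_sum (fun m => pi n m) K (x ^ n)).
      apply Rmult_le_compat_l; [apply pow_le; lra|].
      apply sum_f_R0_mono; [auto|lia].
    + apply sum_f_R0_mono; [|lia].
      intros n; apply Rmult_le_pos; [apply pow_le; lra|apply cond_pos_sum; auto].
  - apply (Rmult_le_reg_l gap); [exact Hgap|].
    replace (gap * ((1 + exp (beta / theta * x ^ k)) / gap + beta / mu * G / gap * shell pi j))
      with (1 + exp (beta / theta * x ^ k) + beta / mu * G * shell pi j) by (field; lra).
    exact Hcols.
Qed.

Lemma exp_moment_bounded (r s : R) :
  1 <= r -> alpha / mu * r < 1 -> 1 <= s ->
  exists B, forall K, square_sum (fun n m => pi n m * r ^ n * s ^ m) K <= B.
Proof.
  intros Hr Hrho Hs.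
  destruct (exists_gap (alpha / mu) r ltac:(apply Rdiv_lt_0_compat; lra) Hrho)
    as [x [k [Hrx [Hk Hgap]]]].
  destruct (exists_pow_ge (x / r) s) as [k0 Hk0].
  { apply (Rmult_lt_reg_r r); [lra|]; unfold Rdiv; rewrite Rmult_assoc, Rinv_l; lra. }
  exists ((1 + exp (beta / theta * x ^ k)) / (1 - / INR k - alpha / mu * x)
          + exp (beta / theta * (r ^ k0 * s))).
  intros K.
  assert (HN := N_moment_bound x k K ltac:(lra) Hk Hgap).
  assert (HM := M_moment_bound (r ^ k0 * s) K K
                  ltac:(apply Rmult_le_pos; [apply pow_le|]; lra)).
  eapply Rle_trans; [|apply Rplus_le_compat; [exact HN|exact HM]].
  unfold square_sum; rewrite <- plus_sum; apply sum_Rle; intros n _.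
  rewrite <- plus_sum; apply sum_Rle; intros m _.
  pose proof (pow_mul_pow_le r s x k0 n m Hr Hs ltac:(lra) Hk0).
  pose proof (pi_ge0 n m); nra.
Qed.

End Moments.

Definition rate_N (mu : R) (n m : nat) : R := mu * fracn (INR n) (n + m).

Definition rate_M (nu theta : R) (n m : nat) : R :=
  nu * fracn (INR m) (n + m) + theta * INR m.

Lemma stationary_PS_balanced (alpha beta mu nu theta : R) (pi : nat -> nat -> R) :
  (forall n m, pi n m * out_rate alpha beta mu nu theta n m
               = in_flux alpha beta mu nu theta pi n m) ->
  balanced alpha beta (rate_N mu) (rate_M nu theta) pi.
Proof. intros H n m; exact (H n m). Qed.

Lemma rate_N_0 (mu : R) (m : nat) : rate_N mu 0 m = 0.
Proof. unfold rate_N, fracn; destruct (0 + m)%nat; simpl; [ring|unfold Rdiv; ring]. Qed.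

Lemma rate_M_0 (nu theta : R) (n : nat) : rate_M nu theta n 0 = 0.
Proof. unfold rate_M, fracn; destruct (n + 0)%nat; simpl; [ring|unfold Rdiv; ring]. Qed.

Lemma rate_M_ge (nu theta : R) (n m : nat) :
  0 <= nu -> theta * INR m <= rate_M nu theta n m.
Proof.
  intros Hnu; unfold rate_M.
  pose proof (fracn_ge0 (INR m) (n + m) (pos_INR m)); nra.
Qed.

Theorem lemma1 (alpha mu nu theta beta : R) (pi : nat -> nat -> R) :
  0 < alpha -> 0 < mu -> 0 < nu -> 0 < theta -> 0 < beta ->
  alpha / mu < 1 ->
  is_stationary_PS alpha beta mu nu theta pi ->
  forall u v : C, Cmod u < / (alpha / mu) ->
  exists B : R, forall K : nat,
    square_sum (fun n m => pi n m * Cmod u ^ n * Cmod v ^ m) K <= B.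
Proof.
  intros Ha Hm Hn Ht Hb Hrho [Hpi [Htot Hbal]] u v Hu.
  assert (Hrho0 : 0 < alpha / mu) by (apply Rdiv_lt_0_compat; lra).
  assert (Hr : alpha / mu * Rmax 1 (Cmod u) < 1).
  { apply (Rmax_case 1 (Cmod u) (fun t => alpha / mu * t < 1)); [lra|].
    apply (Rmult_lt_compat_l (alpha / mu)) in Hu; [|exact Hrho0].
    rewrite Rinv_r in Hu; lra. }
  destruct (exp_moment_bounded alpha beta mu theta (rate_N mu) (rate_M nu theta) pi
              Ha Hb Hm Ht Hpi Htot (stationary_PS_balanced _ _ _ _ _ _ Hbal)
              (rate_N_0 mu) (rate_M_0 nu theta) (fun n m => Rle_refl _)
              (fun n m => rate_M_ge nu theta n m ltac:(lra))
              (Rmax 1 (Cmod u)) (Rmax 1 (Cmod v)) (Rmax_l _ _) Hr (Rmax_l _ _))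
    as [B HB].
  exists B; intros K; eapply Rle_trans; [|apply HB].
  apply sum_growing; intros n; apply sum_growing; intros m.
  rewrite !Rmult_assoc; apply Rmult_le_compat_l; [apply Hpi|].
  apply Rmult_le_compat; try (apply pow_le, Cmod_ge_0);
    apply pow_incr; split; [apply Cmod_ge_0|apply Rmax_r|apply Cmod_ge_0|apply Rmax_r].
Qed.
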